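(* Let $n,m\in\mathbb{N}$, $f,g\in C[0,1]$ and let $\overline{B}_{n,m}$ be the composite Bernstein operator. Then for every $k\in\{1,\dots,m\}$ and $x\in\left[\frac{k-1}{m},\frac{k}{m}\right]$, $$ \left|\overline{B}_{n,m}(fg;x)-\overline{B}_{n,m}(f;x)\,\overline{B}_{n,m}(g;x)\right|\le\frac14\,\widetilde{\omega}\left(f;2\sqrt{\tfrac{(x-\frac{k-1}{m})(\frac km-x)}{n}}\right)\widetilde{\omega}\left(g;2\sqrt{\tfrac{(x-\frac{k-1}{m})(\frac km-x)}{n}}\right). $$
   Context: For $a<b$, $f:[a,b]\to\mathbb{R}$ and $n\in\mathbb{N}$, $B_n^{[a,b]}(f;x)=\frac{1}{(b-a)^n}\sum_{i=0}^n\binom{n}{i}(x-a)^i(b-x)^{n-i}f\left(a+i\frac{b-a}{n}\right)$. For $1\le k\le m$, $\overline{B}_{n,m}(f;x):=B_n^{[\frac{k-1}{m},\frac{k}{m}]}(f;x)$ for $x\in\left[\frac{k-1}{m},\frac{k}{m}\right]$. For $f\in C[0,1]$, $\omega(f;t)=\sup\{|f(x)-f(y)|:x,y\in[0,1],|x-y|\le t\}$ is the first-order modulus of continuity, and its least concave majorant is $\widetilde{\omega}(f;t)=\sup_{0\le x\le t\le y\le1,\,x\ne y}\frac{(t-x)\omega(f,y)+(y-t)\omega(f,x)}{y-x}$ for $0\le t\le1$, and $\widetilde{\omega}(f;t)=\omega(f,1)$ for $t>1$. *)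

From HB Require Import structures.
From mathcomp Require Import all_boot all_order all_algebra.
From mathcomp Require Import boolp classical_sets reals.
Set Implicit Arguments. Unset Strict Implicit. Unset Printing Implicit Defensive.
Import Order.TTheory GRing.Theory Num.Theory.
Local Open Scope ring_scope.
Local Open Scope classical_set_scope.

Section Defs.
Variable R : realType.

Definition bernstein_ab (a b : R) (n : nat) (f : R -> R) (x : R) : R :=
  (b - a)^-1 ^+ n *
  \sum_(i < n.+1) ('C(n, i)%:R * (x - a) ^+ i * (b - x) ^+ (n - i)
                    * f (a + i%:R * ((b - a) / n%:R))).

(* index k in {1..m} of the subinterval [(k-1)/m, k/m] containing x:
   k = max(1, ceil(m x)) *)
Definition cb_index (m : nat) (x : R) : nat :=
  maxn 1 `|Num.ceil (m%:R * x)|%N.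

Definition comp_bernstein (n m : nat) (f : R -> R) (x : R) : R :=
  let k := cb_index m x in
  bernstein_ab ((k%:R - 1) / m%:R) (k%:R / m%:R) n f x.

Definition omega (f : R -> R) (t : R) : R :=
  sup [set r | exists x y : R, [/\ 0 <= x <= 1, 0 <= y <= 1, `|x - y| <= t
                                & r = `|f x - f y|]].

(* least concave majorant of omega f *)
Definition omega_tilde (f : R -> R) (t : R) : R :=
  if t <= 1 then
    sup [set r | exists x y : R, 0 <= x <= t /\ t <= y <= 1 /\ x != y /\
          r = ((t - x) * omega f y + (y - t) * omega f x) / (y - x)]
  else omega f 1.

End Defs.

(* On [a, b], bernstein_ab is the mean of f at the nodes u_i under the binomial
   weights of t = (x - a)/(b - a), so B(fg) - B(f) B(g) is a covariance, and
   |Cov(F, G)| <= sd(F) sd(G).  The nodes have second moment (x - a)(b - x)/n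
   about x, so d := 2 sqrt((x - a)(b - x)/n) is twice their spread.  As
   omega_tilde f is the least concave majorant of omega f, some line of slope
   s >= 0 through (d, omega_tilde f d) dominates omega f at all the distances
   |u_i - u_j|.  Hence |F_i - F_j| <= A + s |u_i - u_j| with
   A = omega_tilde f d - s d, which gives a centre c with
   |F_i - c| <= A/2 + s |u_i - x|, and then
   Var F <= (A/2 + s d/2)^2 = (omega_tilde f d / 2)^2. *)

From HB Require Import structures.
From mathcomp Require Import all_boot all_order all_algebra.
From mathcomp Require Import all_classical all_reals all_analysis.
From mathcomp Require Import ring lra.
Import numFieldNormedType.Exports.
Import Order.TTheory GRing.Theory Num.Theory.
Local Open Scope ring_scope.
Local Open Scope classical_set_scope.
Set Implicit Arguments. Unset Strict Implicit. Unset Printing Implicit Defensive.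

Lemma quadratic_ge0_discr (R : realFieldType) (a b c : R) : 0 <= a ->
  (forall t, 0 <= t ^+ 2 * a - 2 * t * b + c) -> b ^+ 2 <= a * c.
Proof.
move=> a0; have [->|a_neq0] := eqVneq a 0 => q_ge0.
  have [->|b_neq0] := eqVneq b 0; first by rewrite expr0n mul0r.
  have := q_ge0 ((c + 1) / (2 * b)).
  have -> : 2 * ((c + 1) / (2 * b)) * b = c + 1 by field.
  by rewrite !mulr0 !mul0r; lra.
have a_gt0 : 0 < a by rewrite lt_def a_neq0.
have := q_ge0 (b / a).
have -> : (b / a) ^+ 2 * a - 2 * (b / a) * b + c = c - b ^+ 2 / a by field.
by rewrite subr_ge0 ler_pdivrMr // mulrC.
Qed.

Section FiniteExpectation.
Variables (R : realFieldType) (I : finType) (p : I -> R).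
Hypotheses (p_ge0 : forall i, 0 <= p i) (p_sum1 : \sum_i p i = 1).

Definition wmean (X : I -> R) : R := \sum_i p i * X i.
Definition wvar (X : I -> R) : R := wmean (fun i => X i ^+ 2) - wmean X ^+ 2.
Definition wcov (X Y : I -> R) : R :=
  wmean (fun i => X i * Y i) - wmean X * wmean Y.

Lemma eq_wmean X Y : X =1 Y -> wmean X = wmean Y.
Proof. by move=> eXY; apply: eq_bigr => i _; rewrite eXY. Qed.

Lemma wmeanD X Y : wmean (fun i => X i + Y i) = wmean X + wmean Y.
Proof. by rewrite /wmean -big_split; apply: eq_bigr => i _; rewrite mulrDr. Qed.

Lemma wmeanZ c X : wmean (fun i => c * X i) = c * wmean X.
Proof. by rewrite /wmean mulr_sumr; apply: eq_bigr => i _; rewrite mulrCA. Qed.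

Lemma wmean_cst c : wmean (fun=> c) = c.
Proof. by rewrite /wmean -mulr_suml p_sum1 mul1r. Qed.

Lemma ler_wmean X Y : (forall i, X i <= Y i) -> wmean X <= wmean Y.
Proof. by move=> leXY; apply: ler_sum => i _; apply: ler_wpM2l. Qed.

Lemma wmean_ge0 X : (forall i, 0 <= X i) -> 0 <= wmean X.
Proof. by move=> X_ge0; apply: sumr_ge0 => i _; apply: mulr_ge0. Qed.

Lemma wmean_sqr_sub X c :
  wmean (fun i => (X i - c) ^+ 2) = wvar X + (wmean X - c) ^+ 2.
Proof.
rewrite (@eq_wmean _ (fun i => X i ^+ 2 + ((- 2 * c) * X i + c ^+ 2))); last first.
  by move=> i; ring.
by rewrite !wmeanD wmeanZ wmean_cst /wvar; ring.
Qed.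

Lemma wvar_ge0 X : 0 <= wvar X.
Proof.
have := wmean_sqr_sub X (wmean X); rewrite subrr expr0n addr0 => <-.
by apply: wmean_ge0 => i; apply: sqr_ge0.
Qed.

Lemma wvar_le_wmean_sqr_sub X c : wvar X <= wmean (fun i => (X i - c) ^+ 2).
Proof. by rewrite wmean_sqr_sub lerDl sqr_ge0. Qed.

Lemma wvar_scale_sub t X Y :
  wvar (fun i => t * X i - Y i)
  = t ^+ 2 * wvar X - 2 * t * wcov X Y + wvar Y.
Proof.
rewrite /wvar (@eq_wmean (fun i => t * X i - Y i) (fun i => t * X i + (- 1) * Y i)).
  rewrite (@eq_wmean _ (fun i => t ^+ 2 * X i ^+ 2 + ((- 2 * t) * (X i * Y i) + Y i ^+ 2))).
    by rewrite !wmeanD !wmeanZ /wcov; ring.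
  by move=> i; ring.
by move=> i; ring.
Qed.

Lemma wcov_sqr_le X Y : wcov X Y ^+ 2 <= wvar X * wvar Y.
Proof.
apply: quadratic_ge0_discr; first exact: wvar_ge0.
by move=> t; rewrite -wvar_scale_sub wvar_ge0.
Qed.

Lemma normr_wcov_le X Y (A B : R) : 0 <= A -> 0 <= B ->
  wvar X <= A ^+ 2 -> wvar Y <= B ^+ 2 -> `|wcov X Y| <= A * B.
Proof.
move=> A_ge0 B_ge0 VX VY.
rewrite -(ler_pXn2r (isT : (0 < 2)%N)) ?nnegrE ?mulr_ge0 // real_normK ?num_real //.
apply: le_trans (wcov_sqr_le X Y) _; rewrite exprMn.
by apply: ler_pM => //; apply: wvar_ge0.
Qed.

End FiniteExpectation.

Lemma exists_center (R : realDomainType) (I : finType) (F r : I -> R) :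
  (forall i j, F i - r i <= F j + r j) -> exists c, forall i, `|F i - c| <= r i.
Proof.
move=> overlap; case: (pickP (@predT I)) => [i0 _|I0]; last first.
  by exists 0 => i; have := I0 i.
exists (\big[Order.max/F i0 - r i0]_i (F i - r i)) => i.
rewrite ler_distl -lerBlDr le_bigmax andbT.
by rewrite lerBlDr; apply: bigmax_le => [|j _]; apply: overlap.
Qed.

Lemma wvar_le_of_dist_le (R : rcfType) (I : finType) (p u F : I -> R) (A s c : R) :
  (forall i, 0 <= p i) -> \sum_i p i = 1 -> 0 <= A -> 0 <= s ->
  (forall i j, `|F i - F j| <= A + s * `|u i - u j|) ->
  wvar p F <= (A / 2 + s * Num.sqrt (wmean p (fun i => (u i - c) ^+ 2))) ^+ 2.
Proof.
move=> p_ge0 p_sum1 A_ge0 s_ge0 F_dist.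
pose d i : R := `|u i - c|.
have sd_ge0 i : 0 <= s * d i by rewrite mulr_ge0 ?normr_ge0.
have [c' F_near] : exists c', forall i, `|F i - c'| <= A / 2 + s * d i.
  apply: exists_center => i j.
  have u_dist : `|u i - u j| <= d i + d j.
    by rewrite /d (_ : u i - u j = (u i - c) - (u j - c)) ?ler_normB //; ring.
  have := ler_wpM2l s_ge0 u_dist; have := F_dist i j; have := ler_norm (F i - F j).
  rewrite mulrDr; lra.
set S := wmean p _.
have d_sqr : wmean p (fun i => d i ^+ 2) = S.
  by apply: eq_wmean => i; rewrite /d real_normK ?num_real.
have S_ge0 : 0 <= S by apply: wmean_ge0 => // i; apply: sqr_ge0.
have Ed_le : wmean p d <= Num.sqrt S.
  have := wvar_ge0 p_ge0 p_sum1 d; rewrite /wvar d_sqr subr_ge0 => EdS.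
  by rewrite (le_trans (ler_norm _)) // -sqrtr_sqr ler_wsqrtr.
apply: le_trans (wvar_le_wmean_sqr_sub p_sum1 F c') _.
apply: (@le_trans _ _ (wmean p (fun i => (A / 2 + s * d i) ^+ 2))).
  apply: ler_wmean => // i; rewrite -[(F i - c') ^+ 2]real_normK ?num_real //.
  by rewrite lerXn2r ?nnegrE ?addr_ge0 ?divr_ge0.
rewrite (@eq_wmean _ _ p _ (fun i => A ^+ 2 / 4 + ((A * s) * d i + s ^+ 2 * d i ^+ 2)));
  last by move=> i; field.
rewrite !wmeanD !wmeanZ wmean_cst // d_sqr.
have := ler_wpM2l (mulr_ge0 A_ge0 s_ge0) Ed_le.
have := sqr_sqrtr S_ge0; set r := Num.sqrt S => r_sqr.
rewrite (_ : (A / 2 + s * r) ^+ 2 = A ^+ 2 / 4 + (A * s * r + s ^+ 2 * r ^+ 2)); last by field.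
rewrite r_sqr; lra.
Qed.

Section SupportingLine.
Variables (R : realFieldType) (w : R -> R) (M dl : R).
Hypothesis w_le : forall x, 0 <= x <= dl -> w x <= M.
Hypothesis chord_le : forall x y, 0 <= x < dl -> dl < y -> y <= 1 ->
  (dl - x) * w y + (y - dl) * w x <= M * (y - x).

Lemma le_chord_slope x y : 0 <= x < dl -> dl < y <= 1 ->
  w x <= M + (w y - M) / (y - dl) * (x - dl).
Proof.
move=> x_in /andP[dl_lt_y y_le1].
have y_dl_gt0 : 0 < y - dl by rewrite subr_gt0.
have := chord_le x_in dl_lt_y y_le1.
set t := (w y - M) / (y - dl).
have -> : w y = M + t * (y - dl) by rewrite /t divfK ?gt_eqF //; ring.
move=> chord; rewrite -(ler_pM2l y_dl_gt0).
have -> : (y - dl) * (M + t * (x - dl))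
  = M * (y - x) - (dl - x) * (M + t * (y - dl)) by ring.
lra.
Qed.

(* s is the steepest chord slope from (dl, M) to a point D i beyond dl; by the
   chord inequality the line M + s (x - dl) also dominates w to the left of dl. *)
Lemma supporting_line (I : finType) (D : I -> R) :
  0 <= dl -> 0 <= w 0 -> (forall i, 0 <= D i <= 1) ->
  exists s, [/\ 0 <= s, s * dl <= M & forall i, w (D i) <= M + s * (D i - dl)].
Proof.
move=> dl_ge0 w0_ge0 D_in.
pose T i := if dl < D i then (w (D i) - M) / (D i - dl) else 0.
pose s := \big[Order.max/0]_i T i.
pose below t := forall x, 0 <= x < dl -> w x <= M + t * (x - dl).
have below0 : below 0.
  by move=> x /andP[x_ge0 x_lt]; rewrite mul0r addr0 w_le // x_ge0 ltW.
have below_s : below s.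
  apply: (big_ind below) => // [t1 t2 b1 b2|i _]; first by case: leP.
  rewrite /T; case: ifP => // dl_lt x x_in.
  by apply: le_chord_slope; rewrite ?dl_lt; case/andP: (D_in i).
have s_ge0 : 0 <= s by apply: bigmax_ge_id.
exists s; split => //.
  have [dl_gt0|] := ltP 0 dl.
    by have := below_s 0; rewrite lexx dl_gt0 => /(_ isT); lra.
  move=> dl_le0; have dl0 : dl = 0 by apply/le_anti; rewrite dl_le0 dl_ge0.
  by rewrite dl0 mulr0; have := @w_le 0; rewrite dl0 lexx => /(_ isT); lra.
move=> i; have /andP[D_ge0 _] := D_in i.
case: (ltgtP dl (D i)) => [dl_lt|lt_dl|<-].
- have : T i <= s by apply: le_bigmax.
  by rewrite /T dl_lt ler_pdivrMr ?subr_gt0 // lerBlDl.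
- by apply: below_s; rewrite D_ge0 lt_dl.
- by rewrite subrr mulr0 addr0 w_le // lexx dl_ge0.
Qed.

End SupportingLine.

Section ModulusOfContinuity.
Variables (R : realType) (f : R -> R).
Hypothesis f_cont : {within `[0, 1], continuous f}.

Let osc t := [set r | exists x y : R, [/\ 0 <= x <= 1, 0 <= y <= 1, `|x - y| <= t
                                     & r = `|f x - f y|]].

Let osc_ubound : exists K, forall t, ubound (osc t) K.
Proof.
have [xM _ f_le] := EVT_max ler01 f_cont.
have [xm _ f_ge] := EVT_min ler01 f_cont.
exists (f xM - f xm) => t _ [x [y [x01 y01 _ ->]]].
have x_in : x \in `[0, 1]%R by rewrite in_itv.
have y_in : y \in `[0, 1]%R by rewrite in_itv.
have := f_le _ x_in; have := f_le _ y_in; have := f_ge _ x_in; have := f_ge _ y_in.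
by rewrite ler_norml => *; apply/andP; split; lra.
Qed.

Let osc_neq0 t : 0 <= t -> osc t !=set0.
Proof. by move=> t_ge0; exists 0, 0, 0; split; rewrite ?subrr ?normr0 ?lexx ?ler01. Qed.

Lemma dist_le_omega x y t : 0 <= x <= 1 -> 0 <= y <= 1 -> `|x - y| <= t ->
  `|f x - f y| <= omega f t.
Proof.
move=> x01 y01 xy_le; have [K K_ub] := osc_ubound.
by apply: ub_le_sup; [exists K; apply: K_ub | exists x, y].
Qed.

Lemma omega_ge0 t : 0 <= t -> 0 <= omega f t.
Proof.
move=> t_ge0; have := @dist_le_omega 0 0 t.
by rewrite !subrr normr0 lexx ler01 => /(_ isT isT t_ge0).
Qed.

Lemma le_omega t1 t2 : 0 <= t1 <= t2 -> omega f t1 <= omega f t2.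
Proof.
move=> /andP[t1_ge0 t12]; apply: ge_sup; first exact: osc_neq0.
by move=> _ [x [y [x01 y01 xy_le ->]]]; rewrite dist_le_omega // (le_trans xy_le).
Qed.

Lemma chord_le_omega_tilde t x y : t <= 1 -> 0 <= x <= t -> t <= y <= 1 -> x != y ->
  ((t - x) * omega f y + (y - t) * omega f x) / (y - x) <= omega_tilde f t.
Proof.
move=> t_le1 /andP[x_ge0 x_le] /andP[y_ge y_le1] xy; rewrite /omega_tilde t_le1.
have [K K_ub] := osc_ubound.
have omega_le t' : 0 <= t' -> omega f t' <= K.
  by move=> t'_ge0; apply: ge_sup; [exact: osc_neq0 | exact: K_ub].
apply: ub_le_sup; last by exists x, y; rewrite x_ge0 x_le y_ge y_le1.
exists K => _ [x' [y' [/andP[x'_ge0 x'_le] [/andP[y'_ge y'_le1] [x'y' ->]]]]].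
have y'x'_gt0 : 0 < y' - x'.
  by rewrite subr_gt0 lt_neqAle x'y' (le_trans x'_le y'_ge).
rewrite ler_pdivrMr //.
have := omega_le x' x'_ge0; have := omega_le y' (le_trans x'_ge0 (le_trans x'_le y'_ge)).
have tx_ge0 : 0 <= t - x' by rewrite subr_ge0.
have yt_ge0 : 0 <= y' - t by rewrite subr_ge0.
move=> wy wx; have := ler_wpM2l tx_ge0 wy; have := ler_wpM2l yt_ge0 wx; lra.
Qed.

Lemma omega_le_omega_tilde t : 0 <= t <= 1 -> omega f t <= omega_tilde f t.
Proof.
move=> /andP[t_ge0 t_le1]; have [t_lt1|t_ge1] := ltP t 1.
  apply: le_trans (chord_le_omega_tilde (x := t) (y := 1) t_le1 _ _ _).
  - by rewrite subrr mul0r add0r mulrAC divff ?mul1r // subr_eq0 gt_eqF.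
  - by rewrite lexx t_ge0.
  - by rewrite lexx t_le1.
  - by rewrite lt_eqF.
have t1 : t = 1 by apply: le_anti; rewrite t_le1 t_ge1.
apply: le_trans (chord_le_omega_tilde (x := 0) (y := 1) t_le1 _ _ _).
- by rewrite t1 subrr mul0r addr0 !subr0 invr1 !mulr1 mul1r.
- by rewrite lexx t_ge0.
- by rewrite t_le1 lexx.
- by rewrite eq_sym oner_neq0.
Qed.

Lemma omega_tilde_ge0 t : 0 <= t <= 1 -> 0 <= omega_tilde f t.
Proof.
move=> t01; apply: le_trans (omega_le_omega_tilde t01).
by apply: omega_ge0; case/andP: t01.
Qed.

End ModulusOfContinuity.

Lemma wvar_le_omega_tilde (R : realType) (I : finType) (p u : I -> R) (phi : R -> R) (c : R) :
  {within `[0, 1], continuous phi} ->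
  (forall i, 0 <= p i) -> \sum_i p i = 1 -> (forall i, 0 <= u i <= 1) ->
  2 * Num.sqrt (wmean p (fun i => (u i - c) ^+ 2)) <= 1 ->
  wvar p (fun i => phi (u i))
  <= (omega_tilde phi (2 * Num.sqrt (wmean p (fun i => (u i - c) ^+ 2))) / 2) ^+ 2.
Proof.
move=> phi_cont p_ge0 p_sum1 u01; set dl := 2 * _ => dl_le1.
have dl_ge0 : 0 <= dl by rewrite mulr_ge0 ?sqrtr_ge0.
set M := omega_tilde phi dl.
have omega_le x : 0 <= x <= dl -> omega phi x <= M.
  move=> /andP[x_ge0 x_le].
  by apply: le_trans (le_omega phi_cont _) (omega_le_omega_tilde _ _); rewrite ?x_ge0 ?dl_ge0.
have chord x y : 0 <= x < dl -> dl < y -> y <= 1 ->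
    (dl - x) * omega phi y + (y - dl) * omega phi x <= M * (y - x).
  move=> /andP[x_ge0 x_lt] dl_lt y_le1.
  have yx_gt0 : 0 < y - x by rewrite subr_gt0 (lt_trans x_lt).
  rewrite -ler_pdivrMr //; apply: chord_le_omega_tilde => //.
  - by rewrite x_ge0 ltW.
  - by rewrite ltW.
  - by rewrite lt_eqF // (lt_trans x_lt).
have dist01 (ij : I * I) : 0 <= `|u ij.1 - u ij.2| <= 1.
  have /andP[? ?] := u01 ij.1; have /andP[? ?] := u01 ij.2.
  by rewrite normr_ge0 /= ler_norml; apply/andP; split; lra.
have [s [s_ge0 sdl_le phi_le]] := supporting_line omega_le chord
  (D := fun ij : I * I => `|u ij.1 - u ij.2|) dl_ge0 (omega_ge0 phi_cont (lexx 0)) dist01.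
apply: le_trans (wvar_le_of_dist_le (A := M - s * dl) (u := u) c p_ge0 p_sum1 _ s_ge0 _) _.
- by rewrite subr_ge0.
- move=> i j; have := phi_le (i, j); rewrite /= mulrBr => phi_line.
  apply: le_trans (dist_le_omega phi_cont (u01 i) (u01 j) (lexx _)) _.
  by rewrite -addrA [- _ + _]addrC.
- rewrite (_ : Num.sqrt _ = dl / 2); last by rewrite /dl; field.
  by rewrite (_ : (M - s * dl) / 2 + s * (dl / 2) = M / 2) //; field.
Qed.

Section BinomialWeights.
Variable R : realFieldType.

Definition bweight (n : nat) (t : R) (i : 'I_n.+1) : R :=
  'C(n, i)%:R * t ^+ i * (1 - t) ^+ (n - i).
Arguments bweight : clear implicits.

Lemma bweight_ge0 (n : nat) (t : R) (i : 'I_n.+1) : 0 <= t <= 1 -> 0 <= bweight n t i.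
Proof.
by case/andP=> t_ge0 t_le1; rewrite !mulr_ge0 ?exprn_ge0 ?subr_ge0.
Qed.

Lemma sum_bweight (n : nat) (t : R) : \sum_i bweight n t i = 1.
Proof.
rewrite -[RHS](expr1n _ n) -[X in X ^+ n](subrK t 1) exprDn.
by apply: eq_bigr => i _; rewrite /bweight -mulr_natl; ring.
Qed.

Lemma sum_bweight_shift (n : nat) (t : R) (phi : nat -> R) :
  \sum_(i < n.+2) bweight n.+1 t i * (i%:R * phi i)
  = n.+1%:R * t * \sum_(j < n.+1) bweight n t j * phi j.+1.
Proof.
rewrite big_ord_recl /= mul0r mulr0 add0r mulr_sumr; apply: eq_bigr => j _.
rewrite /bweight /bump /= add1n subSS exprS.
have binE : (n.+1%:R * 'C(n, j)%:R = j.+1%:R * 'C(n.+1, j.+1)%:R :> R).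
  by rewrite -!natrM mul_bin_diag.
transitivity (n.+1%:R * 'C(n, j)%:R * t * t ^+ j * (1 - t) ^+ (n - j) * phi j.+1);
  last by ring.
by rewrite binE; ring.
Qed.

Lemma wmean_bweight_index (n : nat) (t : R) : wmean (bweight n t) (fun i => i%:R) = n%:R * t.
Proof.
case: n => [|n]; first by rewrite /wmean big_ord1 !mulr0 mul0r.
have := sum_bweight_shift n t (fun=> 1).
rewrite (eq_bigr (bweight n t)) => [|j _]; last by rewrite mulr1.
rewrite sum_bweight mulr1 => <-.
by apply: eq_bigr => i _; rewrite mulr1.
Qed.

Lemma wvar_bweight_index (n : nat) (t : R) :
  wvar (bweight n t) (fun i => i%:R) = n%:R * t * (1 - t).
Proof.
rewrite /wvar wmean_bweight_index; case: n => [|n].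
  by rewrite /wmean big_ord1 !mul0r expr0n mulr0 subr0.
rewrite /wmean (eq_bigr (fun i : 'I_n.+2 => bweight n.+1 t i * (i%:R * i%:R))) => [|i _];
  last by rewrite expr2.
rewrite sum_bweight_shift.
rewrite (eq_bigr (fun j : 'I_n.+1 => bweight n t j * j%:R + bweight n t j)) => [|j _];
  last by rewrite -natr1 mulrDr mulr1.
rewrite big_split /= sum_bweight.
have := wmean_bweight_index n t; rewrite /wmean => ->.
rewrite -natr1; ring.
Qed.

End BinomialWeights.

Arguments bweight {R} n t i.

Section BernsteinOnInterval.
Variables (R : realType) (a b : R).
Hypothesis a_lt_b : a < b.

Definition bnode (n i : nat) : R := a + i%:R * ((b - a) / n%:R).

Lemma bernstein_abE (n : nat) (f : R -> R) (x : R) :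
  bernstein_ab a b n f x = wmean (bweight n ((x - a) / (b - a))) (fun i => f (bnode n i)).
Proof.
have ba_neq0 : b - a != 0 by rewrite subr_eq0 gt_eqF.
rewrite /bernstein_ab /wmean mulr_sumr; apply: eq_bigr => i _; rewrite /bweight.
have -> : 1 - (x - a) / (b - a) = (b - x) / (b - a) by field.
have splitn : (b - a)^-1 ^+ n = (b - a)^-1 ^+ i * (b - a)^-1 ^+ (n - i).
  by rewrite -exprD subnKC // -ltnS.
rewrite /bnode splitn !expr_div_n !exprVn; ring.
Qed.

Lemma bnode_in (n : nat) (i : 'I_n.+1) : (0 < n)%N -> a <= bnode n i <= b.
Proof.
move=> n_gt0; have n_pos : 0 < n%:R :> R by rewrite ltr0n.
have i_le : i%:R <= n%:R :> R by rewrite ler_nat -ltnS.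
have ba_gt0 : 0 < b - a by rewrite subr_gt0.
have step_le : i%:R * ((b - a) / n%:R) <= b - a.
  by rewrite mulrA ler_pdivrMr // mulrC ler_pM2l.
have step_ge0 : 0 <= i%:R * ((b - a) / n%:R) by rewrite mulr_ge0 ?divr_ge0 // ltW.
by rewrite /bnode; apply/andP; split; lra.
Qed.

Lemma wmean_bnode_sqr (n : nat) (x : R) : (0 < n)%N ->
  wmean (bweight n ((x - a) / (b - a))) (fun i => (bnode n i - x) ^+ 2)
  = (x - a) * (b - x) / n%:R.
Proof.
move=> n_gt0; have ba_neq0 : b - a != 0 by rewrite subr_eq0 gt_eqF.
have n_neq0 : n%:R != 0 :> R by rewrite pnatr_eq0 -lt0n.
set t := (x - a) / (b - a); set h := (b - a) / n%:R.
rewrite (@eq_wmean _ _ _ _ (fun i : 'I_n.+1 => h ^+ 2 * (i%:R - n%:R * t) ^+ 2)); last first.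
  by move=> i; rewrite /bnode /t /h; field; rewrite ba_neq0 n_neq0.
rewrite (wmeanZ _ _ (fun i : 'I_n.+1 => (i%:R - n%:R * t) ^+ 2)).
rewrite (wmean_sqr_sub (sum_bweight n t) (fun i : 'I_n.+1 => i%:R)).
rewrite wmean_bweight_index wvar_bweight_index.
by rewrite subrr expr0n addr0 /h /t; field; rewrite n_neq0 ba_neq0.
Qed.

End BernsteinOnInterval.

Lemma two_sqrt_spread_le1 (R : rcfType) (n : nat) (a b x : R) :
  (0 < n)%N -> 0 <= a -> a < b -> b <= 1 -> a <= x <= b ->
  2 * Num.sqrt ((x - a) * (b - x) / n%:R) <= 1.
Proof.
move=> n_gt0 a_ge0 a_lt_b b_le1 /andP[a_le_x x_le_b].
set z := (x - a) * (b - x) / n%:R.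
have z_ge0 : 0 <= z by rewrite divr_ge0 // mulr_ge0 // subr_ge0.
have z_le : z <= (x - a) * (b - x).
  by rewrite ler_pdivrMr ?ltr0n // ler_peMr ?mulr_ge0 ?subr_ge0 // ler1n.
have am_gm : 4 * ((x - a) * (b - x)) <= (b - a) ^+ 2.
  by have := sqr_ge0 ((x - a) - (b - x)); rewrite !expr2; nra.
have ba_le1 : (b - a) ^+ 2 <= 1 by rewrite expr2; nra.
rewrite -(ler_pXn2r (isT : (0 < 2)%N)) ?nnegrE ?mulr_ge0 ?sqrtr_ge0 //.
by rewrite expr1n exprMn sqr_sqrtr //; lra.
Qed.

Lemma bernstein_cov_le (R : realType) (f g : R -> R) (n : nat) (a b x : R) :
  {within `[0, 1], continuous f} -> {within `[0, 1], continuous g} ->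
  (0 < n)%N -> 0 <= a -> a < b -> b <= 1 -> a <= x <= b ->
  `|bernstein_ab a b n (fun t => f t * g t) x
    - bernstein_ab a b n f x * bernstein_ab a b n g x|
  <= 4^-1 * omega_tilde f (2 * Num.sqrt ((x - a) * (b - x) / n%:R))
          * omega_tilde g (2 * Num.sqrt ((x - a) * (b - x) / n%:R)).
Proof.
move=> f_cont g_cont n_gt0 a_ge0 a_lt_b b_le1 x_in.
have dl_le1 := two_sqrt_spread_le1 n_gt0 a_ge0 a_lt_b b_le1 x_in.
have /andP[a_le_x x_le_b] := x_in.
have ba_gt0 : 0 < b - a by rewrite subr_gt0.
set t := (x - a) / (b - a).
have t01 : 0 <= t <= 1.
  apply/andP; split; first by rewrite divr_ge0 ?subr_ge0 ?(ltW a_lt_b).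
  by rewrite ler_pdivrMr // mul1r lerD2r.
have p_ge0 := @bweight_ge0 R n t ^~ t01.
have p_sum1 := sum_bweight n t.
have u01 (i : 'I_n.+1) : 0 <= bnode a b n i <= 1.
  by have /andP[? ?] := bnode_in a_lt_b i n_gt0; apply/andP; split; lra.
set z := (x - a) * (b - x) / n%:R in dl_le1 *.
have var_le (phi : R -> R) : {within `[0, 1], continuous phi} ->
    wvar (bweight n t) (fun i => phi (bnode a b n i))
    <= (omega_tilde phi (2 * Num.sqrt z) / 2) ^+ 2.
  move=> phi_cont; have := wvar_le_omega_tilde (c := x) phi_cont p_ge0 p_sum1 u01.
  by rewrite wmean_bnode_sqr // => /(_ dl_le1).
have dl01 : 0 <= 2 * Num.sqrt z <= 1 by rewrite dl_le1 mulr_ge0 ?sqrtr_ge0.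
rewrite !bernstein_abE // -/t.
set dl := 2 * Num.sqrt z.
rewrite (_ : 4^-1 * _ * _ = omega_tilde f dl / 2 * (omega_tilde g dl / 2)); last by field.
by apply: normr_wcov_le; rewrite ?divr_ge0 ?omega_tilde_ge0 ?var_le.
Qed.

Lemma grid_interval (R : realFieldType) (m j : nat) : (0 < m)%N -> (1 <= j <= m)%N ->
  [/\ 0 <= (j%:R - 1) / m%:R :> R, (j%:R - 1) / m%:R < j%:R / m%:R :> R
    & j%:R / m%:R <= 1 :> R].
Proof.
move=> m_gt0 /andP[j_ge1 j_le_m]; have m_pos : 0 < m%:R :> R by rewrite ltr0n.
split.
- by rewrite divr_ge0 ?subr_ge0 ?ler1n // ltW.
- by rewrite ltr_pM2r ?invr_gt0 // gtrBl.
- by rewrite ler_pdivrMr // mul1r ler_nat.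
Qed.

Lemma cb_index_natr (R : realType) (m j : nat) : (0 < m)%N ->
  cb_index m (j%:R / m%:R : R) = maxn 1 j.
Proof.
move=> m_gt0; rewrite /cb_index mulrC divfK ?pnatr_eq0 -?lt0n //.
by rewrite pmulrn intrKceil.
Qed.

Lemma cb_index_in (R : realType) (m k : nat) (x : R) : (0 < m)%N -> (0 < k)%N ->
  (k%:R - 1) / m%:R < x <= k%:R / m%:R -> cb_index m x = k.
Proof.
move=> m_gt0 k_gt0 /andP[lo_lt x_le]; have m_pos : 0 < m%:R :> R by rewrite ltr0n.
rewrite /cb_index (@ceil_def _ _ k%:Z) ?(maxn_idPr k_gt0) //.
rewrite intrB [_%:~R]/= mulrC -ltr_pdivrMr // -ler_pdivlMr //.
by rewrite lo_lt x_le.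
Qed.

(* At the grid point (k - 1)/m with k > 1, cb_index selects the previous
   interval, of which x is the right endpoint: both products then vanish. *)
Lemma cb_index_spec (R : realType) (m k : nat) (x : R) : (0 < m)%N -> (1 <= k <= m)%N ->
  (k%:R - 1) / m%:R <= x <= k%:R / m%:R ->
  [/\ (1 <= cb_index m x <= m)%N,
      ((cb_index m x)%:R - 1) / m%:R <= x <= (cb_index m x)%:R / m%:R
    & (x - ((cb_index m x)%:R - 1) / m%:R) * ((cb_index m x)%:R / m%:R - x)
      = (x - (k%:R - 1) / m%:R) * (k%:R / m%:R - x)].
Proof.
move=> m_gt0 k_in /andP[lo_le x_le]; have [k_ge1 k_le_m] := andP k_in.
have [lo_lt|x_le_lo] := ltP ((k%:R - 1) / m%:R) x.
  by rewrite (cb_index_in m_gt0 k_ge1) ?lo_lt ?lo_le ?x_le.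
have -> : x = (k.-1%:R) / m%:R.
  by rewrite -(prednK k_ge1) -natr1 addrK in lo_le x_le_lo *; apply/le_anti/andP.
rewrite cb_index_natr //; case: k k_in {k_ge1 k_le_m lo_le x_le x_le_lo} => [//|[|j]] k_in.
  rewrite (maxn_idPl (leq0n 1)) subrr !mul0r lexx.
  by case/andP: k_in => _ ->; split; rewrite ?divr_ge0 ?ler01 ?ler0n.
rewrite (maxn_idPr (ltn0Sn j)) -[j.+2%:R]natr1 addrK !subrr mulr0 mul0r lexx andbT.
split=> //; first by case/andP: k_in => _ /ltnW.
by rewrite ler_pM2r ?invr_gt0 ?ltr0n // lerBlDr lerDl.
Qed.

Theorem mainTheorem3 (R : realType) (n m : nat) (f g : R -> R) :
  (0 < n)%N -> (0 < m)%N ->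
  {within `[0, 1], continuous f} -> {within `[0, 1], continuous g} ->
  forall (k : nat) (x : R), (1 <= k <= m)%N ->
    (k%:R - 1) / m%:R <= x <= k%:R / m%:R ->
    `|comp_bernstein n m (fun t => f t * g t) x
      - comp_bernstein n m f x * comp_bernstein n m g x|
    <= 4^-1 *
       omega_tilde f (2 * Num.sqrt ((x - (k%:R - 1) / m%:R) * (k%:R / m%:R - x) / n%:R))
     * omega_tilde g (2 * Num.sqrt ((x - (k%:R - 1) / m%:R) * (k%:R / m%:R - x) / n%:R)).
Proof.
move=> n_gt0 m_gt0 f_cont g_cont k x k_in x_in.
have [j_in x_in_j <-] := cb_index_spec m_gt0 k_in x_in.
have [lo_ge0 lo_lt_hi hi_le1] := grid_interval R m_gt0 j_in.
exact: bernstein_cov_le.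
Qed.
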